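(* Let $(X,d)$ be a finite metric space and $\alpha\ge 1$. If there is an $\alpha$-competitive randomized online algorithm for the continuous-time MTS model on $(X,d)$ (for piecewise continuous cost paths), then there is an $\alpha$-competitive randomized online algorithm for the discrete-time MTS model on $(X,d)$.
   Context: Discrete-time MTS: initial state $\rho_0\in X$; input a finite sequence of cost functions $c_t:X\to\mathbb R_+$; a randomized online algorithm chooses a random state $\rho_t$ whose law depends only on $c_1,\dots,c_t$, with cost $\sum_t[c_t(\rho_t)+d(\rho_{t-1},\rho_t)]$; $\mathsf{cost}^*$ is the infimum of this over deterministic state sequences from $\rho_0$. Continuous-time MTS: the input is a piecewise continuous path $(c(t))_{t\ge 0}$ of cost functions $c(t):X\to\mathbb R_+$ (supported on a bounded time interval). An online algorithm maps, for each $T\ge 0$, the path $(c(t))_{t\in[0,T]}$ to a random state $\rho(T)\in X$ (with $\rho$ piecewise constant, $\rho(0)=\rho_0$), paying service cost $\mathbb E\int_0^\infty c(t)(\rho(t))\,dt$ plus movement cost $\mathbb E\sum_{t:\rho(t^-)\ne\rho(t)}d(\rho(t^-),\rho(t))$. The offline optimum is the infimum of the same total cost over deterministic such paths starting from $\rho_0$. In both models, $\alpha$-competitive means: for every $\rho_0$ there is $\beta$ with expected online cost $\le\alpha\cdot$(offline optimum)$+\beta$ for every input. *)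

From Stdlib Require Import Reals Lra List ClassicalEpsilon.
Open Scope R_scope.

Definition is_metric {X : Type} (d : X -> X -> R) : Prop :=
  (forall x y, 0 <= d x y) /\
  (forall x y, d x y = 0 <-> x = y) /\
  (forall x y, d x y = d y x) /\
  (forall x y z, d x z <= d x y + d y z).

Definition finite_type (X : Type) : Prop := exists l : list X, forall x, In x l.

Inductive ereal : Type := Fin (r : R) | PInf.

Definition ele (a b : ereal) : Prop :=
  match a, b with
  | _, PInf => True
  | PInf, Fin _ => False
  | Fin x, Fin y => x <= y
  end.

Definition eaffine (alpha : R) (e : ereal) (beta : R) : ereal :=
  match e with Fin r => Fin (alpha * r + beta) | PInf => PInf end.

(* supremum of a set of reals, in [.., +oo]; empty set gives 0 (never used) *)
Definition esup (E : R -> Prop) : ereal :=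
  match excluded_middle_informative (exists x, E x) with
  | right _ => Fin 0
  | left Hne =>
      match excluded_middle_informative (bound E) with
      | left Hb => Fin (proj1_sig (completeness E Hb Hne))
      | right _ => PInf
      end
  end.

(* infimum of a set of extended reals that is bounded below (all sets used
   here consist of nonnegative costs); the set {+oo} or the empty set gives +oo *)
Definition einf (S : ereal -> Prop) : ereal :=
  match excluded_middle_informative (exists r, S (Fin r)) with
  | right _ => PInf
  | left _ =>
      match esup (fun y => S (Fin (- y))) with
      | Fin m => Fin (- m)
      | PInf => Fin 0 (* unreachable for sets bounded below *)
      end
  end.

Fixpoint rsum (n : nat) (g : nat -> R) : R :=
  match n with O => 0 | S m => rsum m g + g m end.

Record ProbSpace : Type := {
  Omega : Type;
  meas : (Omega -> Prop) -> Prop;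
  P : (Omega -> Prop) -> R;
  meas_ext : forall A B, (forall w, A w <-> B w) -> meas A -> meas B;
  P_ext : forall A B, (forall w, A w <-> B w) -> P A = P B;
  meas_full : meas (fun _ => True);
  meas_compl : forall A, meas A -> meas (fun w => ~ A w);
  meas_cunion : forall A : nat -> Omega -> Prop,
      (forall n, meas (A n)) -> meas (fun w => exists n, A n w);
  P_nonneg : forall A, meas A -> 0 <= P A;
  P_full : P (fun _ => True) = 1;
  P_cadd : forall A : nat -> Omega -> Prop,
      (forall n, meas (A n)) ->
      (forall m n w, m <> n -> A m w -> A n w -> False) ->
      infinite_sum (fun n => P (A n)) (P (fun w => exists n, A n w))
}.

Definition indic {T : Type} (A : T -> Prop) (w : T) : R :=
  if excluded_middle_informative (A w) then 1 else 0.

(* Expectation of a nonnegative [0,+oo]-valued random variable: the supremum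
   of the integrals of nonnegative simple functions below it (Lebesgue). *)
Definition Exp (Om : ProbSpace) (f : Omega Om -> ereal) : ereal :=
  esup (fun v => exists (n : nat) (a : nat -> R) (A : nat -> Omega Om -> Prop),
          (forall i, 0 <= a i) /\ (forall i, meas Om (A i)) /\
          (forall w, ele (Fin (rsum n (fun i => a i * indic (A i) w))) (f w)) /\
          v = rsum n (fun i => a i * P Om (A i))).

Section Disc.
Context {X : Type} (d : X -> X -> R).

Definition disc_valid_input (cs : list (X -> R)) : Prop :=
  Forall (fun c => forall x, 0 <= c x) cs.

(* cost of the state sequence rho (rho 0 = initial state) on input
   cs = [c_1; ...; c_n]:  sum_{t=1}^n c_t(rho t) + d(rho (t-1), rho t) *)
Definition disc_cost (rho : nat -> X) (cs : list (X -> R)) : R :=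
  rsum (length cs)
    (fun i => nth i cs (fun _ => 0) (rho (S i)) + d (rho i) (rho (S i))).

Definition disc_opt (rho0 : X) (cs : list (X -> R)) : ereal :=
  einf (fun e => exists sigma : nat -> X, sigma 0%nat = rho0 /\ e = Fin (disc_cost sigma cs)).

(* A randomized online algorithm on the probability space Om: given the initial
   state rho0, the prefix [c_1;...;c_t] of the input and the random seed w,
   it returns the state rho_t.  Hence rho_t depends only on c_1..c_t. *)
Definition disc_alg (Om : ProbSpace) (A : X -> list (X -> R) -> Omega Om -> X) : Prop :=
  (forall rho0 w, A rho0 nil w = rho0) /\
  (forall rho0 cs x, disc_valid_input cs -> meas Om (fun w => A rho0 cs w = x)).

Definition disc_competitive (alpha : R) : Prop :=
  exists (Om : ProbSpace) (A : X -> list (X -> R) -> Omega Om -> X),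
    disc_alg Om A /\
    forall rho0 : X, exists beta : R, forall cs, disc_valid_input cs ->
      ele (Exp Om (fun w => Fin (disc_cost (fun t => A rho0 (firstn t cs) w) cs)))
          (eaffine alpha (disc_opt rho0 cs) beta).
End Disc.

Definition partition (T : R) (k : nat) (p : nat -> R) : Prop :=
  p 0%nat = 0 /\ p k = T /\ (forall i, (i < k)%nat -> p i < p (S i)).

(* piecewise continuous on [0,oo): on each bounded interval finitely many pieces,
   on each open piece f agrees with a function continuous on the closed piece
   (so one-sided limits exist) *)
Definition piecewise_continuous (f : R -> R) : Prop :=
  forall T, 0 < T -> exists k p, partition T k p /\
    forall i, (i < k)%nat -> exists g : R -> R,
      (forall s, p i <= s <= p (S i) -> continuity_pt g s) /\
      (forall s, p i < s < p (S i) -> f s = g s).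

Definition piecewise_constant {X : Type} (rho : R -> X) : Prop :=
  forall T, 0 < T -> exists k p, partition T k p /\
    forall i, (i < k)%nat -> forall s, p i <= s < p (S i) -> rho s = rho (p i).

Section Cont.
Context {X : Type} (d : X -> X -> R).

Definition cont_valid_input (c : R -> X -> R) : Prop :=
  (forall t x, 0 <= t -> 0 <= c t x) /\
  (exists S, forall t x, S <= t -> c t x = 0) /\
  (forall x, piecewise_continuous (fun t => c t x)).

(* Riemann integral over [a,b] (0 if not Riemann integrable) *)
Definition RInt (f : R -> R) (a b : R) : R :=
  match excluded_middle_informative (inhabited (Riemann_integrable f a b)) with
  | left H => RiemannInt (epsilon H (fun _ => True))
  | right _ => 0
  end.

Definition left_lim (rho : R -> X) (t : R) (x : X) : Prop :=
  exists eps, 0 < eps /\ forall s, t - eps < s < t -> rho s = x.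

Definition left_val (rho : R -> X) (t : R) : X :=
  epsilon (inhabits (rho t)) (left_lim rho t).

Definition is_jump (rho : R -> X) (T t : R) : Prop :=
  0 < t <= T /\ left_val rho t <> rho t.

Definition movement (rho : R -> X) (T : R) : R :=
  match excluded_middle_informative
          (exists l : list R, NoDup l /\ forall t, In t l <-> is_jump rho T t) with
  | left H =>
      fold_right (fun t acc => d (left_val rho t) (rho t) + acc) 0
                 (proj1_sig (constructive_indefinite_description _ H))
  | right _ => 0
  end.

Definition cont_cost (c : R -> X -> R) (rho : R -> X) : ereal :=
  esup (fun v => exists T, 0 <= T /\
          v = RInt (fun t => c t (rho t)) 0 T + movement rho T).

Definition cont_opt (rho0 : X) (c : R -> X -> R) : ereal :=
  einf (fun e => exists rho : R -> X,
          piecewise_constant rho /\ rho 0 = rho0 /\ e = cont_cost c rho).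

(* A randomized online algorithm: given rho0, the input path c and the random
   seed w, returns a path B rho0 c w : R -> X whose value at T depends only on
   (c(t))_{t in [0,T]}. *)
Definition cont_alg (Om : ProbSpace) (B : X -> (R -> X -> R) -> Omega Om -> R -> X) : Prop :=
  (forall rho0 c c' w T, cont_valid_input c -> cont_valid_input c' -> 0 <= T ->
     (forall t x, 0 <= t <= T -> c t x = c' t x) -> B rho0 c w T = B rho0 c' w T) /\
  (forall rho0 c w, cont_valid_input c ->
     B rho0 c w 0 = rho0 /\ piecewise_constant (B rho0 c w)) /\
  (forall rho0 c T x, cont_valid_input c -> 0 <= T ->
     meas Om (fun w => B rho0 c w T = x)).

Definition cont_competitive (alpha : R) : Prop :=
  exists (Om : ProbSpace) (B : X -> (R -> X -> R) -> Omega Om -> R -> X),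
    cont_alg Om B /\
    forall rho0 : X, exists beta : R, forall c, cont_valid_input c ->
      ele (Exp Om (fun w => cont_cost c (B rho0 c w)))
          (eaffine alpha (cont_opt rho0 c) beta).
End Cont.

(* A discrete input [c_1; ...; c_n] is run as the continuous input that costs
   nothing on [0, 1) and [c_j] on [j, j + 1).  After seeing [c_1; ...; c_t] the
   discrete algorithm knows, by causality, the continuous run on [0, t + 1), and
   moves to a state that is cheapest for [c_t] among the states occupied during
   [t, t + 1).  Its service cost at step t is thus at most the continuous service
   cost on that unit interval, and since its states are visited in order by the
   continuous path, the triangle inequality bounds its movement by the continuous
   movement.  Conversely a discrete schedule, followed with moves at integer
   times, is a continuous schedule of at most the same cost, so the continuous
   optimum is at most the discrete one. *)

From Pilot Require Import Defs.
From Stdlib Require Import Reals Lra Lia List Permutation ClassicalEpsilon ZArith.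
From Coquelicot Require Import Coquelicot.
Open Scope R_scope.

Definition nat_floor (s : R) : nat := Z.to_nat (Zfloor s).

Lemma nat_floor_unique (j : nat) (s : R) : INR j <= s < INR j + 1 -> nat_floor s = j.
Proof.
  intros Hs. unfold nat_floor. rewrite (Zfloor_eq (Z.of_nat j)); [apply Nat2Z.id|].
  rewrite <- INR_IZR_INZ. exact Hs.
Qed.

Lemma nat_floor_INR (j : nat) : nat_floor (INR j) = j.
Proof. apply nat_floor_unique. lra. Qed.

Lemma nat_floor_bound (s : R) : 0 <= s -> INR (nat_floor s) <= s < INR (nat_floor s) + 1.
Proof.
  intros Hs. unfold nat_floor.
  assert (H0 : (0 <= Zfloor s)%Z) by (apply Zfloor_lub; exact Hs).
  rewrite INR_IZR_INZ, Z2Nat.id by exact H0. apply Zfloor_bound.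
Qed.

Lemma le_nat_floor (s : R) (n : nat) : INR n <= s -> (n <= nat_floor s)%nat.
Proof.
  intros Hs. unfold nat_floor.
  assert (H : (Z.of_nat n <= Zfloor s)%Z) by (apply Zfloor_lub; rewrite <- INR_IZR_INZ; exact Hs).
  lia.
Qed.

Lemma nat_floor_le (s : R) (n : nat) : s < INR n + 1 -> (nat_floor s <= n)%nat.
Proof.
  intros Hs. unfold nat_floor.
  assert (H : (Zfloor s < Z.of_nat n + 1)%Z).
  { apply lt_IZR. rewrite plus_IZR, <- INR_IZR_INZ. pose proof (Zfloor_bound s). lra. }
  lia.
Qed.

Lemma exists_INR_lt_le_S (T : R) : 0 < T -> exists m : nat, INR m < T <= INR m + 1.
Proof.
  intros HT. destruct (Req_dec (INR (nat_floor T)) T) as [E|E].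
  - destruct (nat_floor T) as [|m] eqn:Hm; [simpl in E; lra|].
    exists m. rewrite S_INR in E. lra.
  - exists (nat_floor T). pose proof (nat_floor_bound T). lra.
Qed.

Lemma ele_trans (a b c : ereal) : ele a b -> ele b c -> ele a c.
Proof. destruct a, b, c; simpl; intros; try lra; tauto. Qed.

Lemma eaffine_mono (alpha beta : R) (a b : ereal) :
  0 <= alpha -> ele a b -> ele (eaffine alpha a beta) (eaffine alpha b beta).
Proof.
  destruct a, b; simpl; intros; try tauto.
  apply Rplus_le_compat_r, Rmult_le_compat_l; assumption.
Qed.

Lemma le_esup (E : R -> Prop) (v D : R) : E v -> D <= v -> ele (Fin D) (esup E).
Proof.
  intros Hv HD. unfold esup.
  destruct (excluded_middle_informative (exists x, E x)) as [Hne|Hne]; [|exfalso; eauto].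
  destruct (excluded_middle_informative (bound E)) as [Hb|Hb]; simpl; [|exact I].
  destruct (completeness E Hb Hne) as [m [Hm Hlub]]. simpl. specialize (Hm v Hv). lra.
Qed.

Lemma esup_le (E : R -> Prop) (D : R) :
  (exists v, E v) -> (forall v, E v -> v <= D) -> ele (esup E) (Fin D).
Proof.
  intros Hne' HD. unfold esup.
  destruct (excluded_middle_informative (exists x, E x)) as [Hne|Hne]; [|contradiction].
  destruct (excluded_middle_informative (bound E)) as [Hb|Hb].
  - destruct (completeness E Hb Hne) as [m [Hub Hm]]. exact (Hm D HD).
  - exfalso. apply Hb. exists D. exact HD.
Qed.

Lemma esup_mono (E1 E2 : R -> Prop) :
  (exists v, E1 v) -> (forall v, E1 v -> E2 v) -> ele (esup E1) (esup E2).
Proof.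
  intros [v1 Hv1] H12. unfold esup at 2.
  destruct (excluded_middle_informative (exists x, E2 x)) as [Hne|Hne]; [|exfalso; eauto].
  destruct (excluded_middle_informative (bound E2)) as [Hb|Hb].
  - destruct (completeness E2 Hb Hne) as [m [Hm Hlub]].
    apply esup_le; [eauto|]. intros v Hv. apply Hm, H12, Hv.
  - destruct (esup E1); exact I.
Qed.

(* Nonnegativity keeps the [esup] hidden in [einf] finite. *)
Lemma einf_finite (S : ereal -> Prop) :
  (exists r, S (Fin r)) -> (forall r, S (Fin r) -> 0 <= r) ->
  exists m, einf S = Fin m /\ (forall r, S (Fin r) -> m <= r) /\
            (forall b, (forall r, S (Fin r) -> b <= r) -> b <= m).
Proof.
  intros [r0 Hr0] Hpos. unfold einf, esup.
  destruct (excluded_middle_informative (exists r, S (Fin r))) as [_|Hn]; [|exfalso; eauto].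
  destruct (excluded_middle_informative (exists x, S (Fin (- x)))) as [Hne|Hne].
  2:{ exfalso. apply Hne. exists (- r0). rewrite Ropp_involutive. exact Hr0. }
  destruct (excluded_middle_informative (bound (fun y => S (Fin (- y))))) as [Hb|Hb].
  2:{ exfalso. apply Hb. exists 0. intros y Hy. specialize (Hpos _ Hy). lra. }
  destruct (completeness _ Hb Hne) as [m [Hub Hlub]]. simpl.
  exists (- m). split; [reflexivity|split].
  - intros r Hr. assert (- r <= m) by (apply Hub; rewrite Ropp_involutive; exact Hr). lra.
  - intros b Hb'. assert (m <= - b); [|lra].
    apply Hlub. intros y Hy. specialize (Hb' _ Hy). lra.
Qed.

Lemma einf_mono (S1 S2 : ereal -> Prop) :
  (forall r, S1 (Fin r) -> 0 <= r) -> (forall r, S2 (Fin r) -> 0 <= r) ->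
  (forall r, S2 (Fin r) -> exists r', S1 (Fin r') /\ r' <= r) ->
  ele (einf S1) (einf S2).
Proof.
  intros N1 N2 H.
  destruct (classic (exists r, S2 (Fin r))) as [[r0 Hr0]|Hn].
  2:{ unfold einf at 2.
      destruct (excluded_middle_informative (exists r, S2 (Fin r))); [contradiction|].
      destruct (einf S1); exact I. }
  destruct (H r0 Hr0) as [r1 [Hr1 _]].
  destruct (einf_finite S1 (ex_intro _ r1 Hr1) N1) as [m1 [-> [Hlb1 _]]].
  destruct (einf_finite S2 (ex_intro _ r0 Hr0) N2) as [m2 [-> [_ Hglb2]]]. simpl.
  apply Hglb2. intros r Hr. destruct (H r Hr) as [r' [Hr' Hle]].
  specialize (Hlb1 r' Hr'). lra.
Qed.

Lemma Exp_mono (Om : ProbSpace) (f g : Omega Om -> ereal) :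
  (forall w, ele (Fin 0) (f w)) -> (forall w, ele (f w) (g w)) -> ele (Exp Om f) (Exp Om g).
Proof.
  intros H0 Hfg. unfold Exp. apply esup_mono.
  - exists 0, 0%nat, (fun _ => 0), (fun _ _ => True).
    repeat split; simpl; intros; try lra; [apply meas_full | apply H0].
  - intros v [n [a [A [H1 [H2 [H3 H4]]]]]]. exists n, a, A. repeat split; auto.
    intros w. eapply ele_trans; [apply H3 | apply Hfg].
Qed.

Lemma rsum_nonneg (n : nat) (g : nat -> R) : (forall j, 0 <= g j) -> 0 <= rsum n g.
Proof. intros H. induction n; simpl; [lra|]. pose proof (H n). lra. Qed.

Lemma rsum_le (n : nat) (g h : nat -> R) :
  (forall j, (j < n)%nat -> g j <= h j) -> rsum n g <= rsum n h.
Proof.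
  induction n; intros H; simpl; [lra|].
  pose proof (IHn (fun j hj => H j ltac:(lia))). pose proof (H n ltac:(lia)). lra.
Qed.

Lemma rsum_ext (n : nat) (g h : nat -> R) :
  (forall j, (j < n)%nat -> g j = h j) -> rsum n g = rsum n h.
Proof.
  intros H. apply Rle_antisym; apply rsum_le; intros j Hj; rewrite H by exact Hj; lra.
Qed.

Lemma rsum_plus (n : nat) (g h : nat -> R) : rsum n (fun j => g j + h j) = rsum n g + rsum n h.
Proof. induction n; simpl; [lra | rewrite IHn; lra]. Qed.

Lemma rsum_Sl (n : nat) (g : nat -> R) : rsum (S n) g = g 0%nat + rsum n (fun i => g (S i)).
Proof. induction n; [simpl; lra|]. change (rsum (S (S n)) g) with (rsum (S n) g + g (S n)).
  rewrite IHn. simpl. lra. Qed.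

Lemma rsum_le_length (a b : nat) (g : nat -> R) :
  (a <= b)%nat -> (forall j, 0 <= g j) -> rsum a g <= rsum b g.
Proof. intros Hab H. induction Hab; simpl; [lra|]. pose proof (H m). lra. Qed.

Lemma rsum_vanishing_tail (m N : nat) (g : nat -> R) :
  (forall j, (m <= j)%nat -> g j = 0) -> (m <= N)%nat -> rsum N g = rsum m g.
Proof. intros Hg HmN. induction HmN; [reflexivity|]. simpl. rewrite IHHmN, (Hg m0) by lia. ring. Qed.

Definition fsum {A : Type} (l : list A) (h : A -> R) : R :=
  fold_right (fun x acc => h x + acc) 0 l.

Lemma fsum_perm {A : Type} (l l' : list A) (h : A -> R) : Permutation l l' -> fsum l h = fsum l' h.
Proof. intros HP. induction HP; unfold fsum in *; simpl; lra. Qed.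

Lemma fsum_map {A B : Type} (f : A -> B) (l : list A) (h : B -> R) :
  fsum (map f l) h = fsum l (fun x => h (f x)).
Proof. induction l; unfold fsum in *; simpl; [reflexivity | rewrite IHl; reflexivity]. Qed.

Lemma fsum_ext_in {A : Type} (l : list A) (h h' : A -> R) :
  (forall x, In x l -> h x = h' x) -> fsum l h = fsum l h'.
Proof.
  induction l as [|a l IH]; intros H; [reflexivity|]. unfold fsum in *; simpl.
  rewrite H by (simpl; auto). rewrite IH by (intros; apply H; simpl; auto). reflexivity.
Qed.

Lemma fsum_filter {A : Type} (b : A -> bool) (l : list A) (h : A -> R) :
  (forall x, In x l -> b x = false -> h x = 0) -> fsum (filter b l) h = fsum l h.
Proof.
  induction l as [|a l IH]; intros H; [reflexivity|]. simpl.
  rewrite <- IH by (intros; apply H; simpl; auto).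
  destruct (b a) eqn:E; [reflexivity|]. unfold fsum; simpl.
  rewrite (H a (or_introl eq_refl) E). lra.
Qed.

Lemma fsum_seq (k : nat) (g : nat -> R) : fsum (seq 0 k) g = rsum k g.
Proof.
  assert (Hacc : forall l c, fold_right (fun x acc => g x + acc) c l =
                             fold_right (fun x acc => g x + acc) 0 l + c).
  { induction l as [|a l IHl]; intros c; simpl; [lra | rewrite IHl; lra]. }
  induction k as [|k IH]; [reflexivity|].
  rewrite seq_S. unfold fsum in *. rewrite fold_right_app, Hacc, IH. simpl. lra.
Qed.

Section Metric.
Variables (X : Type) (d : X -> X -> R).
Hypothesis hmet : is_metric d.

Lemma dist_nonneg (x y : X) : 0 <= d x y.
Proof. apply hmet. Qed.

Lemma dist_refl (x : X) : d x x = 0.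
Proof. apply hmet. reflexivity. Qed.

Lemma dist_le_path_sum (y : nat -> X) (a b : nat) : (a <= b)%nat ->
  d (y a) (y b) <= rsum b (fun j => d (y j) (y (S j))) - rsum a (fun j => d (y j) (y (S j))).
Proof.
  intros Hab. induction Hab; [rewrite dist_refl; lra|].
  simpl. pose proof (proj2 (proj2 (proj2 hmet)) (y a) (y m) (y (S m))). lra.
Qed.

Lemma subpath_sum_le (y : nat -> X) (e : nat -> nat) (n : nat) :
  (forall t, (t < n)%nat -> (e t <= e (S t))%nat) ->
  rsum n (fun t => d (y (e t)) (y (e (S t)))) <=
  rsum (e n) (fun j => d (y j) (y (S j))) - rsum (e 0%nat) (fun j => d (y j) (y (S j))).
Proof.
  induction n; intros H; simpl; [lra|].
  pose proof (IHn (fun t ht => H t ltac:(lia))).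
  pose proof (dist_le_path_sum y (e n) (e (S n)) (H n ltac:(lia))). lra.
Qed.

End Metric.

Arguments dist_nonneg {X d} hmet x y.
Arguments dist_refl {X d} hmet x.

Section Partition.
Variables (T : R) (k : nat) (p : nat -> R).
Hypothesis HP : Defs.partition T k p.

Lemma partition_lt (i j : nat) : (i < j)%nat -> (j <= k)%nat -> p i < p j.
Proof.
  destruct HP as [_ [_ Hs]]. intros Hij Hjk. induction Hij.
  - apply Hs; lia.
  - pose proof (Hs m ltac:(lia)). pose proof (IHHij ltac:(lia)). lra.
Qed.

Lemma partition_le (i j : nat) : (i <= j)%nat -> (j <= k)%nat -> p i <= p j.
Proof.
  intros Hij Hjk. destruct (Nat.eq_dec i j) as [->|h]; [lra|].
  left. apply partition_lt; lia.
Qed.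

Lemma partition_locate_closed (t : R) : 0 < t <= T ->
  exists j, (j < k)%nat /\ p j < t <= p (S j).
Proof.
  destruct HP as [H0 [Hk _]]. intros Ht.
  assert (G : forall m, (m <= k)%nat -> t <= p m -> exists j, (j < m)%nat /\ p j < t <= p (S j)).
  { induction m; intros Hm Hlt; [rewrite H0 in Hlt; lra|].
    destruct (Rle_dec t (p m)) as [h|h].
    - destruct (IHm ltac:(lia) h) as [j [Hj1 Hj2]]. exists j; split; [lia | exact Hj2].
    - exists m. split; [lia | lra]. }
  destruct (G k (le_n k) ltac:(rewrite Hk; lra)) as [j Hj]. exists j; exact Hj.
Qed.

Definition piece_index (s : R) : nat :=
  epsilon (inhabits 0%nat) (fun j => (j < k)%nat /\ p j <= s < p (S j)).

Lemma piece_index_spec (s : R) : 0 <= s < T ->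
  (piece_index s < k)%nat /\ p (piece_index s) <= s < p (S (piece_index s)).
Proof.
  destruct HP as [H0 [Hk _]]. intros Hs. unfold piece_index. apply epsilon_spec.
  assert (G : forall m, (m <= k)%nat -> s < p m -> exists j, (j < m)%nat /\ p j <= s < p (S j)).
  { induction m; intros Hm Hlt; [rewrite H0 in Hlt; lra|].
    destruct (Rlt_dec s (p m)) as [h|h].
    - destruct (IHm ltac:(lia) h) as [j [Hj1 Hj2]]. exists j; split; [lia | exact Hj2].
    - exists m. split; [lia | lra]. }
  destruct (G k (le_n k) ltac:(rewrite Hk; lra)) as [j [Hj1 Hj2]]. exists j. split; [lia | exact Hj2].
Qed.

Lemma piece_index_mono (s s' : R) : 0 <= s -> s <= s' -> s' < T ->
  (piece_index s <= piece_index s')%nat.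
Proof.
  intros H0 Hss' HsT.
  destruct (piece_index_spec s ltac:(lra)) as [Hj Hjs].
  destruct (piece_index_spec s' ltac:(lra)) as [Hj' Hjs'].
  destruct (le_lt_dec (piece_index s) (piece_index s')) as [h|h]; [exact h|].
  pose proof (partition_le (S (piece_index s')) (piece_index s) h ltac:(lia)). lra.
Qed.

End Partition.

Section Movement.
Variables (X : Type) (d : X -> X -> R).
Hypothesis hmet : is_metric d.

Lemma left_val_eq (rho : R -> X) (t : R) (x : X) : left_lim rho t x -> left_val rho t = x.
Proof.
  intros Hx. unfold left_val.
  assert (Hy : left_lim rho t (epsilon (inhabits (rho t)) (left_lim rho t)))
    by (apply epsilon_spec; exists x; exact Hx).
  destruct Hx as [e1 [He1 H1]], Hy as [e2 [He2 H2]].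
  set (s := t - Rmin e1 e2 / 2).
  assert (Rmin e1 e2 <= e1) by apply Rmin_l.
  assert (Rmin e1 e2 <= e2) by apply Rmin_r.
  assert (0 < Rmin e1 e2) by (apply Rmin_glb_lt; assumption).
  rewrite <- (H1 s), <- (H2 s); unfold s; [reflexivity | lra | lra].
Qed.

Variables (rho : R -> X) (T : R) (k : nat) (p : nat -> R).
Hypothesis HP : Defs.partition T k p.
Hypothesis Hconst : forall i, (i < k)%nat -> forall s, p i <= s < p (S i) -> rho s = rho (p i).

Lemma left_val_piece (j : nat) (t : R) : (j < k)%nat -> p j < t <= p (S j) ->
  left_val rho t = rho (p j).
Proof.
  intros Hj Ht. apply left_val_eq. exists (t - p j). split; [lra|].
  intros s Hs. apply Hconst; [exact Hj | lra].
Qed.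

Lemma is_jump_partition (t : R) : is_jump rho T t <->
  exists j, (j < k)%nat /\ t = p (S j) /\ rho (p j) <> rho (p (S j)).
Proof.
  pose proof HP as [_ [_ Hs]]. split.
  - intros [Ht Hne]. destruct (partition_locate_closed T k p HP t Ht) as [j [Hj Hjt]].
    rewrite (left_val_piece j t Hj Hjt) in Hne.
    destruct (Rle_lt_or_eq_dec _ _ (proj2 Hjt)) as [h|h].
    + exfalso. apply Hne. symmetry. apply Hconst; [exact Hj | lra].
    + exists j. subst t. auto.
  - intros [j [Hj [-> Hne]]]. split.
    + pose proof (partition_lt T k p HP 0 (S j) ltac:(lia) ltac:(lia)).
      pose proof (partition_le T k p HP (S j) k ltac:(lia) ltac:(lia)).
      destruct HP as [Hp0 [Hpk _]]. rewrite Hp0 in *. rewrite Hpk in *. lra.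
    + rewrite (left_val_piece j (p (S j)) Hj); [exact Hne|]. pose proof (Hs j Hj). lra.
Qed.

(* The jump times are the right ends of the pieces on which [rho] changes value;
   pieces without a change contribute [d x x = 0]. *)
Lemma movement_partition : movement d rho T = rsum k (fun j => d (rho (p j)) (rho (p (S j)))).
Proof.
  set (changes := fun j => if excluded_middle_informative (rho (p j) = rho (p (S j)))
                           then false else true).
  set (L0 := map (fun j => p (S j)) (filter changes (seq 0 k))).
  assert (HL0 : forall t, In t L0 <-> is_jump rho T t).
  { intros t. rewrite is_jump_partition. unfold L0. rewrite in_map_iff.
    setoid_rewrite filter_In. setoid_rewrite in_seq. unfold changes. split.
    - intros [j [Hj1 [Hj2 Hj3]]]. exists j.
      destruct (excluded_middle_informative _); [discriminate|]. repeat split; auto; lia.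
    - intros [j [Hj1 [Hj2 Hj3]]]. exists j. split; [auto|].
      destruct (excluded_middle_informative _); [contradiction|]. split; [lia | reflexivity]. }
  assert (HN0 : NoDup L0).
  { unfold L0. apply NoDup_map_NoDup_ForallPairs; [|apply NoDup_filter, seq_NoDup].
    intros a b Ha Hb Hab. apply filter_In in Ha, Hb. destruct Ha as [Ha _], Hb as [Hb _].
    apply in_seq in Ha, Hb.
    destruct (Nat.lt_total a b) as [h|[h|h]]; [|exact h|].
    - pose proof (partition_lt T k p HP (S a) (S b) ltac:(lia) ltac:(lia)). lra.
    - pose proof (partition_lt T k p HP (S b) (S a) ltac:(lia) ltac:(lia)). lra. }
  unfold movement.
  destruct (excluded_middle_informative _) as [H|H]; [|exfalso; apply H; exists L0; auto].
  destruct (constructive_indefinite_description _ H) as [L [HL1 HL2]]. simpl.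
  change (fsum L (fun t => d (left_val rho t) (rho t)) = rsum k (fun j => d (rho (p j)) (rho (p (S j))))).
  rewrite (fsum_perm L L0).
  2:{ apply NoDup_Permutation; auto. intros t. rewrite HL2, HL0. tauto. }
  assert (Hpiece : forall j, In j (seq 0 k) -> left_val rho (p (S j)) = rho (p j)).
  { intros j Hj. apply in_seq in Hj. apply left_val_piece; [lia|].
    pose proof (proj2 (proj2 HP) j ltac:(lia)). lra. }
  unfold L0. rewrite fsum_map, fsum_filter, <- fsum_seq.
  - apply fsum_ext_in. intros j Hj. rewrite Hpiece; auto.
  - intros j Hj Hb. unfold changes in Hb.
    destruct (excluded_middle_informative _) as [e|]; [|discriminate].
    rewrite Hpiece, e by exact Hj. apply (dist_refl hmet).
Qed.

Lemma rsum_sampled_dist_le_movement (n : nat) (s : nat -> R) :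
  (forall t, (t <= n)%nat -> 0 <= s t < T) -> (forall t, (t < n)%nat -> s t <= s (S t)) ->
  rsum n (fun t => d (rho (s t)) (rho (s (S t)))) <= movement d rho T.
Proof.
  intros Hrange Hmono.
  set (e := fun t => piece_index k p (s t)).
  set (g := fun j => d (rho (p j)) (rho (p (S j)))).
  assert (He : forall t, (t <= n)%nat -> (e t < k)%nat /\ rho (s t) = rho (p (e t))).
  { intros t Ht. destruct (piece_index_spec T k p HP (s t) (Hrange t Ht)) as [Hk Hin].
    split; [exact Hk | apply Hconst; assumption]. }
  rewrite (rsum_ext n _ (fun t => d (rho (p (e t))) (rho (p (e (S t)))))).
  2:{ intros t Ht. rewrite (proj2 (He t ltac:(lia))), (proj2 (He (S t) ltac:(lia))). reflexivity. }
  eapply Rle_trans.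
  { apply (subpath_sum_le X d hmet (fun j => rho (p j)) e n). intros t Ht.
    pose proof (Hrange t ltac:(lia)). pose proof (Hrange (S t) ltac:(lia)).
    apply (piece_index_mono T k p HP); [lra | apply Hmono; exact Ht | lra]. }
  fold g. rewrite movement_partition.
  assert (Hg : forall j, 0 <= g j) by (intros; apply (dist_nonneg hmet)).
  pose proof (rsum_nonneg (e 0%nat) g Hg).
  assert (Hen : (e n <= k)%nat) by (destruct (He n (le_n n)) as [Hlt _]; apply Nat.lt_le_incl, Hlt).
  pose proof (rsum_le_length (e n) k g Hen Hg). unfold g in *. cbv beta. lra.
Qed.

End Movement.

Lemma Defs_RInt_eq (f : R -> R) (a b : R) : ex_RInt f a b -> Defs.RInt f a b = RInt f a b.
Proof.
  intros H. unfold Defs.RInt.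
  destruct (excluded_middle_informative _) as [Hi|Hi].
  - symmetry. apply RInt_Reals.
  - exfalso. apply Hi. constructor. apply ex_RInt_Reals_0. exact H.
Qed.

Lemma ex_RInt_inside (h : R -> R) (A B a b : R) :
  ex_RInt h A B -> A <= a -> a <= b -> b <= B -> ex_RInt h a b.
Proof.
  intros H H1 H2 H3. apply (ex_RInt_Chasles_2 h A a b); [lra|].
  apply (ex_RInt_Chasles_1 h A b B); [lra | exact H].
Qed.

Lemma RInt_Chasles_R (h : R -> R) (a b c : R) : ex_RInt h a b -> ex_RInt h b c ->
  RInt h a c = RInt h a b + RInt h b c.
Proof. intros Hab Hbc. symmetry. exact (RInt_Chasles h a b c Hab Hbc). Qed.

Lemma RInt_const_R (c a b : R) : RInt (fun _ => c) a b = (b - a) * c.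
Proof. rewrite RInt_const. reflexivity. Qed.

Lemma RInt_step_unit (h : R -> R) (a : nat -> R) (N : nat) :
  (forall j s, INR j < s < INR j + 1 -> h s = a j) ->
  ex_RInt h 0 (INR N) /\ RInt h 0 (INR N) = rsum N a.
Proof.
  intros Ha. induction N as [|N [IH1 IH2]].
  - split; [apply ex_RInt_point | simpl; rewrite RInt_point; reflexivity].
  - pose proof (pos_INR N).
    assert (Hext : forall x, Rmin (INR N) (INR (S N)) < x < Rmax (INR N) (INR (S N)) ->
                   a N = h x).
    { intros x Hx. rewrite S_INR, Rmin_left, Rmax_right in Hx by lra. symmetry. apply Ha, Hx. }
    assert (Hp1 : ex_RInt h (INR N) (INR (S N)))
      by (apply (ex_RInt_ext (fun _ => a N)); [exact Hext | apply ex_RInt_const]).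
    assert (Hp2 : RInt h (INR N) (INR (S N)) = a N).
    { rewrite <- (RInt_ext (V := R_CompleteNormedModule) (fun _ => a N) h _ _ Hext).
      rewrite RInt_const_R, S_INR. change (@eq R ((INR N + 1 - INR N) * a N) (a N)). ring. }
    split; [eapply ex_RInt_Chasles; eauto|].
    rewrite (RInt_Chasles_R h 0 (INR N) (INR (S N)) IH1 Hp1), IH2, Hp2. reflexivity.
Qed.

Lemma rsum_le_RInt_unit (h : R -> R) (a : nat -> R) (N : nat) :
  ex_RInt h 0 (INR N) -> (forall j s, (j < N)%nat -> INR j < s < INR j + 1 -> a j <= h s) ->
  rsum N a <= RInt h 0 (INR N).
Proof.
  induction N as [|N IH]; intros Hint Ha; [simpl; rewrite RInt_point; apply Rle_refl|].
  pose proof (pos_INR N). rewrite S_INR in Hint |- *.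
  assert (H1 : ex_RInt h 0 (INR N)) by (apply (ex_RInt_inside h 0 (INR N + 1)); auto; lra).
  assert (H2 : ex_RInt h (INR N) (INR N + 1)) by (apply (ex_RInt_inside h 0 (INR N + 1)); auto; lra).
  rewrite (RInt_Chasles_R h 0 (INR N) (INR N + 1) H1 H2). simpl.
  assert (Hlast : a N <= RInt h (INR N) (INR N + 1)).
  { replace (a N) with (RInt (fun _ => a N) (INR N) (INR N + 1)).
    - apply RInt_le; [lra | apply ex_RInt_const | exact H2 |]. intros s Hs. apply Ha; [lia | lra].
    - rewrite RInt_const_R. change (@eq R ((INR N + 1 - INR N) * a N) (a N)). ring. }
  pose proof (IH H1 (fun j s Hj => Ha j s ltac:(lia))). lra.
Qed.

Lemma ex_RInt_along_piecewise_constant {X : Type} (F : R -> X -> R) (rho : R -> X)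
  (T : R) (k : nat) (p : nat -> R) :
  Defs.partition T k p ->
  (forall i, (i < k)%nat -> forall s, p i <= s < p (S i) -> rho s = rho (p i)) ->
  (forall x a b, 0 <= a -> a <= b -> b <= T -> ex_RInt (fun s => F s x) a b) ->
  ex_RInt (fun s => F s (rho s)) 0 T.
Proof.
  intros HP Hconst HF. pose proof HP as [H0 [Hk Hs]].
  assert (G : forall m, (m <= k)%nat -> ex_RInt (fun s => F s (rho s)) 0 (p m)).
  { induction m; intros Hm; [rewrite H0; apply ex_RInt_point|].
    apply (ex_RInt_Chasles _ 0 (p m)); [apply IHm; lia|].
    pose proof (Hs m ltac:(lia)).
    apply (ex_RInt_ext (fun s => F s (rho (p m)))).
    - intros x Hx. rewrite Rmin_left, Rmax_right in Hx by lra.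
      rewrite (Hconst m ltac:(lia) x) by lra. reflexivity.
    - pose proof (partition_le T k p HP 0 m ltac:(lia) ltac:(lia)).
      pose proof (partition_le T k p HP (S m) k ltac:(lia) ltac:(lia)).
      apply HF; lra. }
  rewrite <- Hk. apply G. lia.
Qed.

Definition unit_grid (m : nat) (T : R) (i : nat) : R := if Nat.leb i m then INR i else T.

Section UnitGrid.
Variables (m : nat) (T : R).
Hypothesis HmT : INR m < T <= INR m + 1.

Lemma unit_grid_le (i : nat) : (i <= m)%nat -> unit_grid m T i = INR i.
Proof. intros H. unfold unit_grid. apply Nat.leb_le in H. rewrite H. reflexivity. Qed.

Lemma unit_grid_last : unit_grid m T (S m) = T.
Proof.
  unfold unit_grid. replace (Nat.leb (S m) m) with false; [reflexivity|].
  symmetry. apply Nat.leb_gt. lia.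
Qed.

Lemma unit_grid_partition : Defs.partition T (S m) (unit_grid m T).
Proof.
  split; [|split]; [apply unit_grid_le; lia | apply unit_grid_last|].
  intros i Hi. destruct (Nat.eq_dec i m) as [->|h].
  - rewrite unit_grid_le, unit_grid_last by lia. lra.
  - rewrite !unit_grid_le, S_INR by lia. lra.
Qed.

Lemma nat_floor_unit_grid (i : nat) (s : R) : (i < S m)%nat ->
  unit_grid m T i <= s < unit_grid m T (S i) -> nat_floor s = i.
Proof.
  intros Hi Hs. apply nat_floor_unique. rewrite unit_grid_le in Hs by lia.
  destruct (Nat.eq_dec i m) as [->|h].
  - rewrite unit_grid_last in Hs. lra.
  - rewrite unit_grid_le, S_INR in Hs by lia. lra.
Qed.

End UnitGrid.

Lemma floor_path_piecewise_constant {A : Type} (y : nat -> A) :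
  piecewise_constant (fun s => y (nat_floor s)).
Proof.
  intros T HT. destruct (exists_INR_lt_le_S T HT) as [m Hm].
  exists (S m), (unit_grid m T). split; [apply unit_grid_partition; exact Hm|].
  intros i Hi s Hs. rewrite (nat_floor_unit_grid m T Hm i s Hi Hs), unit_grid_le by lia.
  rewrite nat_floor_INR. reflexivity.
Qed.

Section Embedding.
Context {X : Type}.

Definition stage_cost (cs : list (X -> R)) (j : nat) (x : X) : R :=
  match j with O => 0 | S i => nth i cs (fun _ => 0) x end.

Definition cont_of_disc (cs : list (X -> R)) (s : R) (x : X) : R :=
  stage_cost cs (nat_floor s) x.

Lemma nth_cost_nonneg (cs : list (X -> R)) (i : nat) (x : X) :
  disc_valid_input cs -> 0 <= nth i cs (fun _ => 0) x.
Proof.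
  intros Hv. destruct (le_lt_dec (length cs) i) as [h|h].
  - rewrite nth_overflow by exact h. lra.
  - unfold disc_valid_input in Hv. rewrite Forall_forall in Hv. apply Hv, nth_In, h.
Qed.

Lemma stage_cost_nonneg (cs : list (X -> R)) (j : nat) (x : X) :
  disc_valid_input cs -> 0 <= stage_cost cs j x.
Proof. intros Hv. destruct j; simpl; [lra | apply nth_cost_nonneg, Hv]. Qed.

Lemma stage_cost_beyond (cs : list (X -> R)) (j : nat) (x : X) :
  (length cs < j)%nat -> stage_cost cs j x = 0.
Proof. intros H. destruct j as [|i]; [reflexivity|]. simpl. rewrite nth_overflow by lia. reflexivity. Qed.

Lemma rsum_stage_cost (cs : list (X -> R)) (n : nat) (y : nat -> X) :
  rsum (S n) (fun j => stage_cost cs j (y j)) = rsum n (fun i => nth i cs (fun _ => 0) (y (S i))).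
Proof. rewrite rsum_Sl. simpl. lra. Qed.

Lemma cont_of_disc_unit (cs : list (X -> R)) (j : nat) (s : R) (x : X) :
  INR j <= s < INR j + 1 -> cont_of_disc cs s x = stage_cost cs j x.
Proof. intros H. unfold cont_of_disc. rewrite (nat_floor_unique j s H). reflexivity. Qed.

Lemma ex_RInt_cont_of_disc (cs : list (X -> R)) (x : X) (a b : R) :
  0 <= a -> a <= b -> ex_RInt (fun s => cont_of_disc cs s x) a b.
Proof.
  intros Ha Hab. destruct (INR_unbounded b) as [N HN].
  apply (ex_RInt_inside _ 0 (INR N)); [|lra..].
  apply (RInt_step_unit _ (fun j => stage_cost cs j x)). intros j s Hs.
  apply cont_of_disc_unit. lra.
Qed.

Lemma cont_of_disc_valid (cs : list (X -> R)) :
  disc_valid_input cs -> cont_valid_input (cont_of_disc cs).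
Proof.
  intros Hv. split; [|split].
  - intros t x _. apply stage_cost_nonneg, Hv.
  - exists (INR (length cs) + 1). intros t x Ht. apply stage_cost_beyond.
    apply le_nat_floor. rewrite S_INR. exact Ht.
  - intros x T HT. destruct (exists_INR_lt_le_S T HT) as [m Hm].
    exists (S m), (unit_grid m T). split; [apply unit_grid_partition; exact Hm|].
    intros i Hi. exists (fun _ => stage_cost cs i x). split.
    + intros s _. apply continuity_pt_const. intros u v; reflexivity.
    + intros s Hs. unfold cont_of_disc. rewrite (nat_floor_unit_grid m T Hm i s Hi); [reflexivity|lra].
Qed.

Lemma cont_of_disc_firstn (cs : list (X -> R)) (t : nat) (s : R) (x : X) :
  s < INR t + 1 -> cont_of_disc (firstn t cs) s x = cont_of_disc cs s x.
Proof.
  intros H. unfold cont_of_disc. pose proof (nat_floor_le s t H).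
  destruct (nat_floor s) as [|i]; [reflexivity|]. simpl.
  rewrite nth_firstn. replace (i <? t)%nat with true; [reflexivity|].
  symmetry. apply Nat.ltb_lt. lia.
Qed.

Lemma disc_valid_input_firstn (cs : list (X -> R)) (t : nat) :
  disc_valid_input cs -> disc_valid_input (firstn t cs).
Proof.
  unfold disc_valid_input. intros Hv. rewrite <- (firstn_skipn t cs) in Hv.
  apply Forall_app in Hv. exact (proj1 Hv).
Qed.

End Embedding.

(* An enumeration of a dense subset of [0, 1) by pairs of naturals: the discrete
   algorithm inspects the continuous one only at countably many times, which keeps
   its states measurable. *)
Definition grid_point (m k : nat) : R := INR k / (INR k + INR m + 1).

Lemma grid_point_range (m k : nat) : 0 <= grid_point m k < 1.
Proof.
  unfold grid_point. pose proof (pos_INR k). pose proof (pos_INR m).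
  split.
  - apply Rmult_le_pos; [lra|]. left. apply Rinv_0_lt_compat. lra.
  - apply Rmult_lt_reg_r with (INR k + INR m + 1); [lra|].
    unfold Rdiv. rewrite Rmult_assoc, Rinv_l by lra. lra.
Qed.

Lemma grid_point_dense (a b : R) : 0 <= a -> a < b -> b <= 1 ->
  exists m k, a <= grid_point m k < b.
Proof.
  intros Ha Hab Hb. destruct (INR_unbounded (1 / (b - a))) as [N HN].
  assert (HbN : 1 < (b - a) * INR N).
  { apply Rmult_lt_reg_r with (/ (b - a)); [apply Rinv_0_lt_compat; lra|].
    replace ((b - a) * INR N * / (b - a)) with (INR N) by (field; lra).
    unfold Rdiv in HN. lra. }
  set (j := nat_floor (a * INR N)).
  pose proof (nat_floor_bound (a * INR N) ltac:(pose proof (pos_INR N); nra)) as Hj. fold j in Hj.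
  assert (HjN : (S j < N)%nat) by (apply INR_lt; rewrite S_INR; nra).
  exists (N - S j - 1)%nat, (S j).
  assert (Hden : INR (S j) + INR (N - S j - 1) + 1 = INR N).
  { rewrite <- plus_INR, <- S_INR. f_equal. lia. }
  unfold grid_point. rewrite Hden. rewrite S_INR in *.
  assert (HN0 : 0 < INR N) by nra.
  split.
  - apply Rmult_le_reg_r with (INR N); [exact HN0|].
    unfold Rdiv. rewrite Rmult_assoc, Rinv_l by lra. lra.
  - apply Rmult_lt_reg_r with (INR N); [exact HN0|].
    unfold Rdiv. rewrite Rmult_assoc, Rinv_l by lra. lra.
Qed.

Section Argmin.
Variables (X : Type) (l : list X).
Hypothesis hl : forall x, In x l.

Definition is_argmin (V : X -> Prop) (f : X -> R) (y : X) : Prop :=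
  V y /\ forall z, V z -> f y <= f z.

Fixpoint first_such (x0 : X) (Q : X -> Prop) (l' : list X) : X :=
  match l' with
  | nil => x0
  | y :: r => if excluded_middle_informative (Q y) then y else first_such x0 Q r
  end.

Lemma first_such_spec (x0 : X) (Q : X -> Prop) (l' : list X) :
  (exists y, In y l' /\ Q y) -> Q (first_such x0 Q l').
Proof.
  induction l' as [|a r IH]; intros [y [Hy HQ]]; [destruct Hy|]. simpl.
  destruct (excluded_middle_informative (Q a)) as [h|h]; [exact h|].
  apply IH. destruct Hy as [->|Hy]; [contradiction | eauto].
Qed.

Lemma argmin_exists (V : X -> Prop) (f : X -> R) : (exists y, V y) -> exists y, is_argmin V f y.
Proof.
  intros [y0 Hy0].
  assert (G : forall l', (exists y, In y l' /\ V y) ->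
            exists y, V y /\ forall z, In z l' -> V z -> f y <= f z).
  { induction l' as [|a r IH]; intros [y [Hy HV]]; [destruct Hy|].
    destruct (classic (exists y, In y r /\ V y)) as [Hr|Hr].
    - destruct (IH Hr) as [b [Hb1 Hb2]].
      destruct (classic (V a /\ f a <= f b)) as [[Ha Hab]|Ha].
      + exists a. split; [exact Ha|]. intros z [->|Hz] Hvz; [lra|]. specialize (Hb2 z Hz Hvz). lra.
      + exists b. split; [exact Hb1|]. intros z [->|Hz] Hvz; [|auto].
        destruct (Rle_dec (f b) (f z)); [assumption | exfalso; apply Ha; split; [exact Hvz | lra]].
    - destruct Hy as [->|Hy]; [|exfalso; eauto].
      exists y. split; [exact HV|]. intros z [->|Hz] Hvz; [lra | exfalso; eauto]. }
  destruct (G l (ex_intro _ y0 (conj (hl y0) Hy0))) as [y [Hy1 Hy2]].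
  exists y. split; [exact Hy1|]. intros z Hz. apply Hy2; [apply hl | exact Hz].
Qed.

Lemma first_such_argmin (x0 : X) (V : X -> Prop) (f : X -> R) :
  (exists y, V y) -> is_argmin V f (first_such x0 (is_argmin V f) l).
Proof.
  intros Hne. apply first_such_spec. destruct (argmin_exists V f Hne) as [y Hy].
  exists y. split; [apply hl | exact Hy].
Qed.

End Argmin.

Section Measurable.
Variable Om : ProbSpace.

Lemma meas_const (Q : Prop) : meas Om (fun _ => Q).
Proof.
  destruct (classic Q) as [h|h].
  - apply (meas_ext Om (fun _ => True)); [tauto | apply meas_full].
  - apply (meas_ext Om (fun w => ~ True)); [tauto | apply meas_compl, meas_full].
Qed.

Lemma meas_or (E1 E2 : Omega Om -> Prop) :
  meas Om E1 -> meas Om E2 -> meas Om (fun w => E1 w \/ E2 w).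
Proof.
  intros H1 H2.
  apply (meas_ext Om (fun w => exists n, (if Nat.eqb n 0 then E1 else E2) w)).
  - intros w. split.
    + intros [n Hn]. destruct (Nat.eqb n 0); auto.
    + intros [h|h]; [exists 0%nat; exact h | exists 1%nat; exact h].
  - apply meas_cunion. intros n. destruct (Nat.eqb n 0); assumption.
Qed.

Lemma meas_and (E1 E2 : Omega Om -> Prop) :
  meas Om E1 -> meas Om E2 -> meas Om (fun w => E1 w /\ E2 w).
Proof.
  intros H1 H2. apply (meas_ext Om (fun w => ~ (~ E1 w \/ ~ E2 w))).
  - intros w. split; [intros h; split; apply NNPP; tauto | tauto].
  - apply meas_compl, meas_or; apply meas_compl; assumption.
Qed.

Lemma meas_forall_in {X : Type} (E : X -> Omega Om -> Prop) (l : list X) :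
  (forall z, meas Om (E z)) -> meas Om (fun w => forall z, In z l -> E z w).
Proof.
  intros H. induction l as [|a r IH].
  - apply (meas_ext Om (fun _ => True)); [intros w; split; [intros _ z [] | tauto] | apply meas_full].
  - apply (meas_ext Om (fun w => E a w /\ (forall z, In z r -> E z w))).
    + intros w. simpl. split; [intros [h1 h2] z [->|hz]; auto | auto].
    + apply meas_and; [apply H | exact IH].
Qed.

Lemma meas_first_such_eq {X : Type} (x0 x : X) (Q : Omega Om -> X -> Prop) (l : list X) :
  (forall y, meas Om (fun w => Q w y)) -> meas Om (fun w => first_such X x0 (Q w) l = x).
Proof.
  intros H. induction l as [|a r IH]; [simpl; apply meas_const|].
  apply (meas_ext Om (fun w => (Q w a /\ a = x) \/ (~ Q w a /\ first_such X x0 (Q w) r = x))).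
  - intros w. simpl. destruct (excluded_middle_informative (Q w a)); tauto.
  - apply meas_or; apply meas_and; auto using meas_const, meas_compl.
Qed.

End Measurable.

Section DiscreteAlgorithm.
Variables (X : Type) (l : list X).
Hypothesis hl : forall x, In x l.
Variables (Om : ProbSpace) (B : X -> (R -> X -> R) -> Omega Om -> R -> X).
Hypothesis hB : cont_alg Om B.

Definition visited (rho0 : X) (cs : list (X -> R)) (w : Omega Om) (y : X) : Prop :=
  exists m k, B rho0 (cont_of_disc cs) w (INR (length cs) + grid_point m k) = y.

Definition disc_of_cont (rho0 : X) (cs : list (X -> R)) (w : Omega Om) : X :=
  match length cs with
  | O => rho0
  | S i => first_such X rho0 (is_argmin X (visited rho0 cs w) (nth i cs (fun _ => 0))) l
  end.

Lemma visited_all (rho0 : X) (cs : list (X -> R)) (w : Omega Om) (s : R) :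
  disc_valid_input cs -> INR (length cs) <= s < INR (length cs) + 1 ->
  visited rho0 cs w (B rho0 (cont_of_disc cs) w s).
Proof.
  intros Hv Hs. set (n := length cs) in *.
  destruct (proj1 (proj2 hB) rho0 (cont_of_disc cs) w (cont_of_disc_valid cs Hv)) as [_ Hpc].
  pose proof (pos_INR n).
  destruct (Hpc (INR n + 1) ltac:(lra)) as [k [p [HP Hconst]]].
  set (j := piece_index k p s).
  destruct (piece_index_spec (INR n + 1) k p HP s ltac:(lra)) as [Hj Hjs]. fold j in Hj, Hjs.
  set (u := Rmin (p (S j)) (INR n + 1)).
  assert (u <= p (S j)) by apply Rmin_l.
  assert (u <= INR n + 1) by apply Rmin_r.
  assert (s < u) by (apply Rmin_glb_lt; lra).
  destruct (grid_point_dense (s - INR n) (u - INR n) ltac:(lra) ltac:(lra) ltac:(lra))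
    as [m [k' Hq]].
  exists m, k'. fold n.
  rewrite (Hconst j Hj (INR n + grid_point m k')) by lra. symmetry. apply Hconst; [exact Hj | lra].
Qed.

Lemma disc_of_cont_argmin (rho0 : X) (cs : list (X -> R)) (w : Omega Om) (i : nat) :
  disc_valid_input cs -> length cs = S i ->
  is_argmin X (visited rho0 cs w) (nth i cs (fun _ => 0)) (disc_of_cont rho0 cs w).
Proof.
  intros Hv Hl. unfold disc_of_cont. rewrite Hl. apply first_such_argmin; [exact hl|].
  exists (B rho0 (cont_of_disc cs) w (INR (length cs))). apply visited_all; [exact Hv | lra].
Qed.

Lemma meas_visited (rho0 : X) (cs : list (X -> R)) (y : X) :
  disc_valid_input cs -> meas Om (fun w => visited rho0 cs w y).
Proof.
  intros Hv. unfold visited. apply meas_cunion. intros m. apply meas_cunion. intros k.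
  apply (proj2 (proj2 hB)); [apply cont_of_disc_valid, Hv|].
  pose proof (pos_INR (length cs)). pose proof (grid_point_range m k). lra.
Qed.

Lemma disc_of_cont_alg : disc_alg Om disc_of_cont.
Proof.
  split; [reflexivity|]. intros rho0 cs x Hv. unfold disc_of_cont.
  destruct (length cs) as [|i]; [apply meas_const|].
  apply meas_first_such_eq. intros y. unfold is_argmin.
  apply meas_and; [apply meas_visited, Hv|].
  apply (meas_ext Om (fun w => forall z, In z l ->
           ~ visited rho0 cs w z \/ nth i cs (fun _ => 0) y <= nth i cs (fun _ => 0) z)).
  - intros w. split.
    + intros h z hz. destruct (h z (hl z)); [contradiction | assumption].
    + intros h z _. destruct (classic (visited rho0 cs w z)); [right | left]; auto.
  - apply meas_forall_in. intros z.
    apply meas_or; [apply meas_compl, meas_visited, Hv | apply meas_const].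
Qed.

Section OnlineCost.
Variables (d : X -> X -> R) (rho0 : X) (cs : list (X -> R)) (w : Omega Om).
Hypothesis hmet : is_metric d.
Hypothesis Hv : disc_valid_input cs.

Let rho := B rho0 (cont_of_disc cs) w.
Let x (t : nat) := disc_of_cont rho0 (firstn t cs) w.

Lemma disc_of_cont_causal (t : nat) (s : R) : 0 <= s < INR t + 1 ->
  B rho0 (cont_of_disc (firstn t cs)) w s = rho s.
Proof.
  intros Hs. apply (proj1 hB);
    [apply cont_of_disc_valid, disc_valid_input_firstn, Hv | apply cont_of_disc_valid, Hv | lra |].
  intros t' y Ht'. apply cont_of_disc_firstn. lra.
Qed.

Lemma disc_state_sampled (t : nat) : (t <= length cs)%nat ->
  exists s, INR t <= s < INR t + 1 /\ rho s = x t.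
Proof.
  intros Ht. destruct t as [|i].
  - exists 0. split; [simpl; lra|]. apply (proj1 (proj2 hB) rho0 _ w (cont_of_disc_valid cs Hv)).
  - assert (Hlen : length (firstn (S i) cs) = S i) by (apply firstn_length_le; exact Ht).
    destruct (disc_of_cont_argmin rho0 (firstn (S i) cs) w i (disc_valid_input_firstn cs _ Hv) Hlen)
      as [[m [k Hmk]] _].
    rewrite Hlen in Hmk. pose proof (grid_point_range m k). pose proof (pos_INR (S i)).
    exists (INR (S i) + grid_point m k). split; [lra|].
    rewrite <- (disc_of_cont_causal (S i)) by lra. exact Hmk.
Qed.

Lemma disc_state_cheapest (i : nat) (s : R) : (i < length cs)%nat ->
  INR (S i) <= s < INR (S i) + 1 -> nth i cs (fun _ => 0) (x (S i)) <= nth i cs (fun _ => 0) (rho s).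
Proof.
  intros Hi Hs.
  assert (Hlen : length (firstn (S i) cs) = S i) by (apply firstn_length_le; exact Hi).
  destruct (disc_of_cont_argmin rho0 (firstn (S i) cs) w i (disc_valid_input_firstn cs _ Hv) Hlen)
    as [_ Hmin].
  rewrite nth_firstn, (proj2 (Nat.ltb_lt i (S i)) (Nat.lt_succ_diag_r i)) in Hmin.
  pose proof (pos_INR (S i)).
  rewrite <- (disc_of_cont_causal (S i) s) by lra. apply Hmin.
  apply visited_all; [apply disc_valid_input_firstn, Hv | rewrite Hlen; exact Hs].
Qed.

Lemma ex_RInt_online_service : ex_RInt (fun s => cont_of_disc cs s (rho s)) 0 (INR (S (length cs))).
Proof.
  destruct (proj1 (proj2 hB) rho0 (cont_of_disc cs) w (cont_of_disc_valid cs Hv)) as [_ Hpc].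
  destruct (Hpc (INR (S (length cs))) (lt_0_INR _ (Nat.lt_0_succ _))) as [k [p [HP Hconst]]].
  apply (ex_RInt_along_piecewise_constant _ rho _ k p HP Hconst).
  intros y a b Ha Hab _. apply ex_RInt_cont_of_disc; assumption.
Qed.

Lemma online_service_le :
  rsum (length cs) (fun i => nth i cs (fun _ => 0) (x (S i))) <=
  RInt (fun s => cont_of_disc cs s (rho s)) 0 (INR (S (length cs))).
Proof.
  rewrite <- (rsum_stage_cost cs (length cs) x).
  apply rsum_le_RInt_unit; [exact ex_RInt_online_service|].
  intros [|i] s Hi Hs; simpl stage_cost.
  - apply stage_cost_nonneg, Hv.
  - rewrite (cont_of_disc_unit cs (S i) s) by lra. apply disc_state_cheapest; [lia | lra].
Qed.

Lemma online_movement_le :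
  rsum (length cs) (fun t => d (x t) (x (S t))) <= movement d rho (INR (S (length cs))).
Proof.
  destruct (proj1 (proj2 hB) rho0 (cont_of_disc cs) w (cont_of_disc_valid cs Hv)) as [_ Hpc].
  destruct (Hpc (INR (S (length cs))) (lt_0_INR _ (Nat.lt_0_succ _))) as [k [p [HP Hconst]]].
  set (sample := fun t => epsilon (inhabits 0) (fun s => INR t <= s < INR t + 1 /\ rho s = x t)).
  assert (Hsample : forall t, (t <= length cs)%nat ->
            INR t <= sample t < INR t + 1 /\ rho (sample t) = x t).
  { intros t Ht. apply epsilon_spec, disc_state_sampled, Ht. }
  rewrite (rsum_ext _ _ (fun t => d (rho (sample t)) (rho (sample (S t))))).
  2:{ intros t Ht. rewrite (proj2 (Hsample t ltac:(lia))), (proj2 (Hsample (S t) ltac:(lia))).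
      reflexivity. }
  apply (rsum_sampled_dist_le_movement X d hmet rho _ k p HP Hconst).
  - intros t Ht. destruct (Hsample t Ht) as [Hs _]. pose proof (pos_INR t).
    apply le_INR in Ht. rewrite S_INR. lra.
  - intros t Ht. destruct (Hsample t ltac:(lia)) as [Hs _].
    destruct (Hsample (S t) ltac:(lia)) as [Hs' _]. rewrite S_INR in Hs'. lra.
Qed.

Lemma online_cost_le : ele (Fin (disc_cost d x cs)) (cont_cost d (cont_of_disc cs) rho).
Proof.
  apply (le_esup _ (Defs.RInt (fun t => cont_of_disc cs t (rho t)) 0 (INR (S (length cs))) +
                    movement d rho (INR (S (length cs))))).
  - exists (INR (S (length cs))). split; [apply pos_INR | reflexivity].
  - rewrite Defs_RInt_eq by exact ex_RInt_online_service.
    unfold disc_cost. rewrite rsum_plus.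
    pose proof online_service_le. pose proof online_movement_le. lra.
Qed.

End OnlineCost.
End DiscreteAlgorithm.

Section Offline.
Variables (X : Type) (d : X -> X -> R).
Hypothesis hmet : is_metric d.

Lemma movement_at_zero (rho : R -> X) : movement d rho 0 = 0.
Proof.
  unfold movement. destruct (excluded_middle_informative _) as [H|H]; [|reflexivity].
  destruct (constructive_indefinite_description _ H) as [[|t L] [HND HL]]; [reflexivity|].
  exfalso. destruct (proj1 (HL t) (or_introl eq_refl)) as [Ht _]. lra.
Qed.

Lemma movement_floor_path_le (y : nat -> X) (m : nat) (T : R) : INR m < T <= INR m + 1 ->
  movement d (fun s => y (nat_floor s)) T <= rsum (S m) (fun j => d (y j) (y (S j))).
Proof.
  intros HmT.
  rewrite (movement_partition X d hmet _ T (S m) (unit_grid m T) (unit_grid_partition m T HmT)).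
  2:{ intros i Hi s Hs. rewrite (nat_floor_unit_grid m T HmT i s Hi Hs), unit_grid_le by lia.
      rewrite nat_floor_INR. reflexivity. }
  apply rsum_le. intros j Hj. rewrite (unit_grid_le m T j), nat_floor_INR by lia.
  destruct (Nat.eq_dec j m) as [->|hj].
  - rewrite unit_grid_last.
    destruct (Rlt_dec T (INR m + 1)) as [h|h].
    + rewrite (nat_floor_unique m T) by lra. rewrite (dist_refl hmet). apply (dist_nonneg hmet).
    + rewrite (nat_floor_unique (S m) T) by (rewrite S_INR; lra). lra.
  - rewrite (unit_grid_le m T (S j)), nat_floor_INR by lia. lra.
Qed.

Lemma rsum_dist_frozen_le (sigma : nat -> X) (n M : nat) :
  rsum M (fun j => d (sigma (Nat.min j n)) (sigma (Nat.min (S j) n))) <=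
  rsum n (fun j => d (sigma j) (sigma (S j))).
Proof.
  assert (Hfrozen : forall j, (n <= j)%nat -> d (sigma (Nat.min j n)) (sigma (Nat.min (S j) n)) = 0).
  { intros j Hj. rewrite !Nat.min_r by lia. apply (dist_refl hmet). }
  destruct (le_lt_dec n M) as [HnM|HMn].
  - rewrite (rsum_vanishing_tail n M _ Hfrozen HnM). right. apply rsum_ext.
    intros j Hj. rewrite !Nat.min_l by lia. reflexivity.
  - apply Rle_trans with (rsum M (fun j => d (sigma j) (sigma (S j)))).
    + right. apply rsum_ext. intros j Hj. rewrite !Nat.min_l by lia. reflexivity.
    + apply rsum_le_length; [lia | intros; apply (dist_nonneg hmet)].
Qed.

Section Schedule.
Variables (cs : list (X -> R)) (sigma : nat -> X).
Hypothesis Hv : disc_valid_input cs.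

Let frozen (j : nat) := sigma (Nat.min j (length cs)).

Lemma offline_service_le (T : R) : 0 <= T ->
  Defs.RInt (fun s => cont_of_disc cs s (frozen (nat_floor s))) 0 T <=
  rsum (length cs) (fun i => nth i cs (fun _ => 0) (sigma (S i))).
Proof.
  intros HT. set (f := fun s => cont_of_disc cs s (frozen (nat_floor s))).
  set (a := fun j => stage_cost cs j (frozen j)).
  assert (Hstep : forall j s, INR j < s < INR j + 1 -> f s = a j).
  { intros j s Hs. unfold f, a, cont_of_disc. rewrite (nat_floor_unique j s) by lra. reflexivity. }
  destruct (INR_unbounded (T + INR (length cs) + 1)) as [N HN].
  pose proof (pos_INR (length cs)).
  assert (HnN : (S (length cs) <= N)%nat) by (apply INR_le; rewrite S_INR; lra).
  destruct (RInt_step_unit f a N Hstep) as [HiN HrN].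
  assert (HiT : ex_RInt f 0 T) by (apply (ex_RInt_inside f 0 (INR N)); auto; lra).
  assert (HiT' : ex_RInt f T (INR N)) by (apply (ex_RInt_inside f 0 (INR N)); auto; lra).
  assert (Hrest : 0 <= RInt f T (INR N)).
  { apply RInt_ge_0; [lra | exact HiT' |]. intros s _. apply stage_cost_nonneg, Hv. }
  assert (Hsum : rsum N a = rsum (length cs) (fun i => nth i cs (fun _ => 0) (sigma (S i)))).
  { rewrite (rsum_vanishing_tail (S (length cs)) N a); [| intros j Hj; apply stage_cost_beyond; lia | exact HnN].
    unfold a. rewrite rsum_stage_cost. apply rsum_ext. intros i Hi.
    unfold frozen. rewrite Nat.min_l by lia. reflexivity. }
  fold f. rewrite Defs_RInt_eq by exact HiT.
  pose proof (RInt_Chasles_R f 0 T (INR N) HiT HiT'). lra.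
Qed.

Lemma offline_movement_le (T : R) : 0 <= T ->
  movement d (fun s => frozen (nat_floor s)) T <= rsum (length cs) (fun i => d (sigma i) (sigma (S i))).
Proof.
  intros HT. destruct (Req_dec T 0) as [->|HT0].
  - rewrite movement_at_zero. apply rsum_nonneg. intros; apply (dist_nonneg hmet).
  - destruct (exists_INR_lt_le_S T ltac:(lra)) as [m Hm].
    eapply Rle_trans; [apply (movement_floor_path_le frozen m T Hm)|].
    apply rsum_dist_frozen_le.
Qed.

Lemma offline_cost_le :
  ele (cont_cost d (cont_of_disc cs) (fun s => frozen (nat_floor s))) (Fin (disc_cost d sigma cs)).
Proof.
  apply esup_le.
  - exists (Defs.RInt (fun t => cont_of_disc cs t (frozen (nat_floor t))) 0 0 +
            movement d (fun s => frozen (nat_floor s)) 0).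
    exists 0. split; [lra | reflexivity].
  - intros v [T [HT ->]]. unfold disc_cost. rewrite rsum_plus.
    pose proof (offline_service_le T HT). pose proof (offline_movement_le T HT). lra.
Qed.

End Schedule.

Lemma cont_cost_nonneg (c : R -> X -> R) (rho : R -> X) (r : R) :
  cont_cost d c rho = Fin r -> 0 <= r.
Proof.
  intros Hr. enough (H : ele (Fin 0) (cont_cost d c rho)) by (rewrite Hr in H; exact H).
  apply (le_esup _ (Defs.RInt (fun t => c t (rho t)) 0 0 + movement d rho 0)).
  - exists 0. split; [lra | reflexivity].
  - rewrite Defs_RInt_eq, RInt_point, movement_at_zero by apply ex_RInt_point.
    change (0 <= 0 + 0). lra.
Qed.

Lemma disc_cost_nonneg (sigma : nat -> X) (cs : list (X -> R)) :
  disc_valid_input cs -> 0 <= disc_cost d sigma cs.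
Proof.
  intros Hv. apply rsum_nonneg. intros j.
  pose proof (nth_cost_nonneg cs j (sigma (S j)) Hv). pose proof (dist_nonneg hmet (sigma j) (sigma (S j))).
  lra.
Qed.

Lemma cont_opt_le_disc_opt (rho0 : X) (cs : list (X -> R)) :
  disc_valid_input cs -> ele (cont_opt d rho0 (cont_of_disc cs)) (disc_opt d rho0 cs).
Proof.
  intros Hv. apply einf_mono.
  - intros r [rho [_ [_ Hr]]]. apply (cont_cost_nonneg (cont_of_disc cs) rho). symmetry. exact Hr.
  - intros r [sigma [_ Hr]]. injection Hr as ->. apply disc_cost_nonneg, Hv.
  - intros r [sigma [Hs0 Hr]]. injection Hr as ->.
    set (rho := fun s => sigma (Nat.min (nat_floor s) (length cs))).
    pose proof (offline_cost_le cs sigma Hv) as Hle. cbv beta in Hle. fold rho in Hle.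
    destruct (cont_cost d (cont_of_disc cs) rho) as [r'|] eqn:E; [|simpl in Hle; contradiction].
    exists r'. split; [|exact Hle].
    exists rho. split; [apply (floor_path_piecewise_constant (fun j => sigma (Nat.min j (length cs))))|]. split; [|symmetry; exact E].
    unfold rho. rewrite (nat_floor_unique 0 0) by (simpl; lra). exact Hs0.
Qed.

End Offline.

Theorem mainTheorem4 (X : Type) (d : X -> X -> R)
  (hfin : finite_type X) (hmet : is_metric d)
  (alpha : R) (halpha : 1 <= alpha) :
  cont_competitive d alpha -> disc_competitive d alpha.
Proof.
  intros [Om [B [hB hcomp]]]. destruct hfin as [l hl].
  exists Om, (disc_of_cont X l Om B). split; [exact (disc_of_cont_alg X l hl Om B hB)|].
  intros rho0. destruct (hcomp rho0) as [beta Hbeta]. exists beta. intros cs Hv.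
  eapply ele_trans.
  { apply (Exp_mono Om _ (fun w => cont_cost d (cont_of_disc cs) (B rho0 (cont_of_disc cs) w))).
    - intros w. apply (disc_cost_nonneg X d hmet _ cs Hv).
    - intros w. apply (online_cost_le X l hl Om B hB d rho0 cs w hmet Hv). }
  eapply ele_trans; [apply (Hbeta _ (cont_of_disc_valid cs Hv))|].
  apply eaffine_mono; [lra|]. apply (cont_opt_le_disc_opt X d hmet rho0 cs Hv).
Qed.
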